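(* Let $t$ be a ground term (well-formed tree) over a ranked alphabet in which no node is labelled with the same unary letter as its father. Apply to $t$: the chain compression for the set of unary letters of $t$; then, for a partition $\Gamma_1,\Gamma_2$ of the set of unary letters of the resulting tree, the $(\Gamma_1,\Gamma_2)$ pair compression, yielding $t'$; then the leaf compression for $(\Gamma_{\ge 1},\Gamma_0)$, where $\Gamma_0$ is the set of constants and $\Gamma_{\ge1}$ the set of other letters of $t'$, yielding $t''$. Then for some partition $\Gamma_1,\Gamma_2$ it holds that $|t''| < \frac{3|t|}{4}$.
   Context: $|t|$ denotes the number of nodes. A tree is well-formed if each node labelled $f$ has exactly $\mathrm{ar}(f)$ ordered children; unary letters have arity $1$, constants arity $0$. For a unary letter $a$, an $a$-maximal chain is a maximal (upward and downward) sequence of nodes $v_1,\dots,v_\ell$ labelled $a$ with $v_{j+1}$ the child of $v_j$. Chain compression for $\Gamma$: simultaneously for all $a\in\Gamma$ and $\ell\ge1$, replace each $a$-maximal chain of length $\ell$ by one node labelled by a fresh unary letter $a_\ell$ (keeping the father and the child). $(\Gamma_1,\Gamma_2)$ pair compression, for disjoint sets of unary letters: every node labelled $a\in\Gamma_1$ whose child is labelled $b\in\Gamma_2$ is merged with that child into a single node labelled by a fresh unary letter $c_{ab}$; done for all such pairs simultaneously. Leaf compression for $(\Gamma_{\ge1},\Gamma_0)$: every node labelled $f\in\Gamma_{\ge1}$ of arity $m$ whose children at exactly the positions $i_1<\dots<i_\ell$ are leaves labelled by constants $a_1,\dots,a_\ell\in\Gamma_0$ is relabelled by a fresh letter $f'$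 (depending on $f,i_1,a_1,\dots,i_\ell,a_\ell$) of arity $m-\ell$ and these children are deleted; done simultaneously for all nodes. All fresh letters are new. *)

From mathcomp Require Import all_boot.
Set Implicit Arguments. Unset Strict Implicit. Unset Printing Implicit Defensive.

Inductive tree (L : Type) : Type := Node of L & seq (tree L).
Arguments Node {L}.

Definition label {L} (t : tree L) : L := let: Node f _ := t in f.
Definition children {L} (t : tree L) : seq (tree L) := let: Node _ ts := t in ts.

Fixpoint nodes {L} (t : tree L) : nat :=
  let: Node _ ts := t in (sumn (map nodes ts)).+1.

Fixpoint wf {L} (ar : L -> nat) (t : tree L) : bool :=
  let: Node f ts := t in (size ts == ar f) && all (wf ar) ts.

Fixpoint no_rep {A : eqType} (ar : A -> nat) (t : tree A) : bool :=
  let: Node a ts := t in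
  all (fun c => ~~ ((ar (label c) == 1) && (label c == a))) ts && all (no_rep ar) ts.

(* The original alphabet is A; every
   letter created by a compression is a new constructor application, hence is
   fresh (different from all letters occurring in the tree it is applied to).
   - Base a       : original letter a
   - Chain a l    : the letter a_l of chain compression
   - Pair a b     : the letter c_ab of pair compression
   - LeafC f ps   : the letter f' of leaf compression, ps = [(i_1,a_1);...;(i_l,a_l)] *)
Inductive letter (A : Type) : Type :=
| Base of A
| Chain of A & nat
| Pair of letter A & letter A
| LeafC of letter A & seq (nat * letter A).
Arguments Base {A}. Arguments Chain {A}. Arguments Pair {A}. Arguments LeafC {A}.

Section Compressions.
Variables (A : eqType) (arA : A -> nat).

Fixpoint lar (x : letter A) : nat :=
  match x with
  | Base a => arA a
  | Chain _ _ => 1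
  | Pair _ _ => 1
  | LeafC f ps => lar f - size ps
  end.

(* Chain compression for the set of all unary letters of the tree.
   [cc k t]: t is the current node, k = number of nodes above it in its
   current a-maximal chain (0 at the top of a chain). *)
Fixpoint cc (k : nat) (t : tree A) : tree (letter A) :=
  let: Node a ts := t in
  if arA a == 1 then
    match ts with
    | [:: c] => if label c == a then cc k.+1 c
                else Node (Chain a k.+1) [:: cc 0 c]
    | _ => Node (Chain a k.+1) (map (cc 0) ts)
    end
  else Node (Base a) (map (cc 0) ts).

Definition chain_compression (t : tree A) : tree (letter A) := cc 0 t.

(* (Gamma1, Gamma2) pair compression, where Gamma1 = unary letters satisfying P
   and Gamma2 = unary letters not satisfying P. *)
Fixpoint pc (P : letter A -> bool) (t : tree (letter A)) : tree (letter A) :=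
  let: Node a ts := t in
  match ts with
  | [:: Node b us] =>
      if [&& lar a == 1, P a, lar b == 1 & ~~ P b]
      then Node (Pair a b) (map (pc P) us)
      else Node a (map (pc P) ts)
  | _ => Node a (map (pc P) ts)
  end.

Definition is_const_leaf (t : tree (letter A)) : bool :=
  (lar (label t) == 0) && (nilp (children t)).

Fixpoint lc (t : tree (letter A)) : tree (letter A) :=
  let: Node f ts := t in
  if lar f == 0 then Node f (map lc ts)
  else
    let ps := [seq (ic.1, label ic.2) |
               ic <- zip (iota 0 (size ts)) ts & is_const_leaf ic.2] in
    let rs := map (fun c => (is_const_leaf c, lc c)) ts in
    Node (LeafC f ps) [seq r.2 | r <- rs & ~~ r.1].

End Compressions.

From mathcomp Require Import all_boot zify.
From Stdlib Require List.
Set Implicit Arguments. Unset Strict Implicit. Unset Printing Implicit Defensive.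

(* As no unary letter repeats along an edge, chain compression merely renames
   every unary letter a to a_1.  Call an edge unary when both its ends are
   unary.  The unary edges form a loopless graph on letters; a greedy cut of it
   followed by the better of its two orientations gives a set Q of letters such
   that at least a quarter of the unary edges go from Q to its complement, and
   pair compression with Gamma_1 = Q merges each of them (they are pairwise
   disjoint).  Leaf compression then deletes every leaf.  Finally a count over
   the tree gives |t| + 2 <= 4 #leaves + #unary edges, whence
   4 |t''| <= 4 |t| - #unary edges - 4 #leaves <= 3 |t| - 2. *)

Lemma tree_ind_in (L : Type) (P : tree L -> Prop) :
  (forall a ts, (forall c, List.In c ts -> P c) -> P (Node a ts)) -> forall t, P t.
Proof.
move=> IH; fix F 1 => -[a ts]; apply: IH.
elim: ts => [|c ts IHts] d /=; first by case.
by case=> [<-|]; [apply: F | apply: IHts].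
Qed.

Section ListIn.
Variable T : Type.

Lemma allP_In (p : pred T) s : reflect (forall x, List.In x s -> p x) (all p s).
Proof.
elim: s => [|x s IH] /=; first by left.
apply: (iffP andP) => [[px /IH ps] y [<-|/ps] //|H].
by split; [apply: H; left | apply/IH => y y_s; apply: H; right].
Qed.

Lemma eq_map_In (U : Type) (f g : T -> U) s :
  (forall x, List.In x s -> f x = g x) -> map f s = map g s.
Proof.
elim: s => //= x s IH fg; congr (_ :: _); first by apply: fg; left.
by apply: IH => y y_s; apply: fg; right.
Qed.

Lemma sumn_addn_In (f g h : T -> nat) s :
  (forall x, List.In x s -> f x + g x = h x) ->
  sumn (map f s) + sumn (map g s) = sumn (map h s).
Proof.
elim: s => //= x s IH fgh; rewrite -IH => [|y y_s]; last by apply: fgh; right.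
by rewrite -(fgh x (or_introl erefl)) addnACA.
Qed.

End ListIn.

Fixpoint leaves {L} (t : tree L) : nat :=
  let: Node _ ts := t in if nilp ts then 1 else sumn (map leaves ts).

Fixpoint tmap {L M} (f : L -> M) (t : tree L) : tree M :=
  let: Node a ts := t in Node (f a) (map (tmap f) ts).

Section Trees.
Variables L M : Type.

Lemma label_tmap (f : L -> M) t : label (tmap f t) = f (label t).
Proof. by case: t. Qed.

Lemma nodes_tmap (f : L -> M) t : nodes (tmap f t) = nodes t.
Proof.
elim/tree_ind_in: t => a ts IH /=; rewrite -map_comp.
by congr (sumn _).+1; apply: eq_map_In.
Qed.

Lemma leaves_tmap (f : L -> M) t : leaves (tmap f t) = leaves t.
Proof.
elim/tree_ind_in: t => a ts IH /=; rewrite /nilp size_map -map_comp.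
by congr (if _ then _ else sumn _); apply: eq_map_In.
Qed.

Lemma wf_tmap (arL : L -> nat) (arM : M -> nat) (f : L -> M) t :
  (forall a, arM (f a) = arL a) -> wf arM (tmap f t) = wf arL t.
Proof.
move=> arf; elim/tree_ind_in: t => a ts IH /=; rewrite size_map arf all_map.
congr (_ && _); apply/allP_In/allP_In => wf_ts c c_ts.
all: by have := wf_ts c c_ts; rewrite /preim /= (IH c c_ts).
Qed.

Lemma wf_arity_label_gt0 (ar : L -> nat) t : wf ar t -> 1 < nodes t -> 0 < ar (label t).
Proof. by case: t => a [|c ts] /= /andP[/eqP <-]. Qed.

End Trees.

Section Cuts.
Variable T : eqType.

Definition cut (Q : pred T) (e : T * T) : bool := Q e.1 != Q e.2.

Definition dcut (Q : pred T) (e : T * T) : bool := Q e.1 && ~~ Q e.2.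

Definition update (Q : pred T) (v : T) (b : bool) : pred T :=
  fun x => if x == v then b else Q x.

Lemma cut_half (E : seq (T * T)) : all (fun e => e.1 != e.2) E ->
  exists Q : pred T, size E <= 2 * count (cut Q) E.
Proof.
have [n] := ubnP (size E); elim: n E => // n IH E ltEn irrE.
case: E ltEn irrE => [|e0 E0] ltEn irrE; first by exists xpred0.
set E := e0 :: E0 in ltEn irrE *; set v := e0.1.
pose at_v e := (e.1 == v) || (e.2 == v).
pose E1 := filter (predC at_v) E; pose E2 := filter at_v E.
have [Q Q_E1] : exists Q : pred T, size E1 <= 2 * count (cut Q) E1.
  apply: IH; last by rewrite all_filter; apply: sub_all irrE => e /= ->; rewrite implybT.
  rewrite size_filter -ltnS (leq_trans _ ltEn) // ltnS /E /= /at_v eqxx /=.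
  exact: count_size.
have cut_off_v b : count (cut (update Q v b)) E1 = count (cut Q) E1.
  apply: eq_in_count => e; rewrite mem_filter => /andP[/norP[e1v e2v] _].
  by rewrite /cut /update (negbTE e1v) (negbTE e2v).
(* An edge at v is cut by exactly one of the two choices for v. *)
have cut_at_v : count (cut (update Q v true)) E2 + count (cut (update Q v false)) E2 = size E2.
  rewrite -(count_predC (cut (update Q v true))); congr (_ + _).
  apply: eq_in_count => -[x y]; rewrite mem_filter /at_v /cut /update /=.
  move=> /andP[xy_v xy_E]; have /= := allP irrE _ xy_E.
  by case: (eqVneq x v) xy_v => [->|_]; case: (eqVneq y v) => _ //=; case: (Q _).
have perm_E : perm_eq (E2 ++ E1) E by rewrite perm_filterC.
have count_E b : count (cut (update Q v b)) E = count (cut Q) E1 + count (cut (update Q v b)) E2.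
  by rewrite -(permP perm_E) count_cat addnC cut_off_v.
have size_E : size E = size E1 + size E2 by rewrite -(perm_size perm_E) size_cat addnC.
have [b cut_b] : exists b, size E2 <= 2 * count (cut (update Q v b)) E2.
  by case: (leqP (size E2) (2 * count (cut (update Q v true)) E2));
    [exists true | exists false; lia].
by exists (update Q v b); rewrite count_E size_E; lia.
Qed.

Lemma dcut_quarter (E : seq (T * T)) : all (fun e => e.1 != e.2) E ->
  exists Q : pred T, size E <= 4 * count (dcut Q) E.
Proof.
move=> /cut_half[Q cutQ].
have split_cut : count (dcut Q) E + count (dcut (predC Q)) E = count (cut Q) E.
  by elim: E {cutQ} => //= e E <-; rewrite /dcut /cut /=; case: (Q e.1); case: (Q e.2) => /=; lia.
have [forward|backward] := leqP (count (cut Q) E) (2 * count (dcut Q) E).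
  by exists Q; lia.
by exists (predC Q); lia.
Qed.

End Cuts.

Section Compressions.
Variables (A : eqType) (arA : A -> nat).

Definition cc_letter (a : A) : letter A := if arA a == 1 then Chain a 1 else Base a.

Lemma lar_cc_letter a : lar arA (cc_letter a) = arA a.
Proof. by rewrite /cc_letter; case: eqP. Qed.

Lemma chain_compression_no_rep t :
  no_rep arA t -> chain_compression arA t = tmap cc_letter t.
Proof.
rewrite /chain_compression; elim/tree_ind_in: t => a ts IH /= /andP[nrep_ch nrep_ts].
have cc_ts : map (cc arA 0) ts = map (tmap cc_letter) ts.
  by apply: eq_map_In => c c_ts; apply: IH => //; apply: (allP_In _ _ nrep_ts).
rewrite {1}/cc_letter; case: ifP => [unary_a|_]; last by rewrite cc_ts.
case: ts cc_ts nrep_ch {IH nrep_ts} => [|c [|c' ts]] /= => [//|[->]|-> //].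
by rewrite andbT; case: (eqVneq (label c) a) => [->|_]; rewrite ?unary_a.
Qed.

Definition unary_link (a : A) (ts : seq (tree A)) : seq (A * A) :=
  if ts is [:: c] then
    if (arA a == 1) && (arA (label c) == 1) then [:: (a, label c)] else [::]
  else [::].

Fixpoint unary_edges (t : tree A) : seq (A * A) :=
  let: Node a ts := t in unary_link a ts ++ flatten (map unary_edges ts).

Lemma unary_edges_irrefl t : no_rep arA t -> all (fun e => e.1 != e.2) (unary_edges t).
Proof.
elim/tree_ind_in: t => a ts IH /= /andP[nrep_ch nrep_ts].
rewrite all_cat; apply/andP; split.
  case: ts nrep_ch {IH nrep_ts} => [|c [|? ?]] //=; rewrite !andbT.
  by case: ifP => //= /andP[_ ->]; rewrite eq_sym andbT.
elim: ts {nrep_ch} IH nrep_ts => //= c ts IHts IH /andP[nrep_c nrep_ts].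
rewrite all_cat IH /=; [|by left | by []].
by apply: IHts => // d d_ts; apply: IH; right.
Qed.

(* The slack for a non-unary root pays for a unary father that gets no unary edge. *)
Lemma nodes_leq_leaves_unary_edges t : wf arA t ->
  nodes t + 2 + (arA (label t) != 1) <= 4 * leaves t + size (unary_edges t).
Proof.
elim/tree_ind_in: t => a ts IH /= /andP[/eqP size_ts wf_ts].
have {}IH c : List.In c ts ->
    nodes c + 2 + (arA (label c) != 1) <= 4 * leaves c + size (unary_edges c).
  by move=> c_ts; apply: IH c_ts (allP_In _ _ wf_ts c c_ts).
have forest_bound : sumn (map nodes ts) + 2 * size ts
                    <= 4 * sumn (map leaves ts) + size (flatten (map unary_edges ts)).
  elim: ts {size_ts wf_ts} IH => //= c ts IHts IH.
  have := IH c (or_introl erefl); have := IHts (fun d d_ts => IH d (or_intror d_ts)).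
  by rewrite size_cat; lia.
case: ts size_ts IH forest_bound {wf_ts} => [|c [|c' ts]] size_ts IH forest_bound.
- by rewrite -size_ts.
- have := IH c (or_introl erefl); rewrite /= -size_ts /= !addn0 cats0 size_cat.
  by case: (arA (label c) == 1) => /=; lia.
- by move: forest_bound; rewrite /= -size_ts /=; lia.
Qed.

Section PairCompression.
Variable P : letter A -> bool.

Definition merges (a : letter A) (ts : seq (tree (letter A))) : bool :=
  if ts is [:: c] then [&& lar arA a == 1, P a, lar arA (label c) == 1 & ~~ P (label c)]
  else false.

Fixpoint npairs (s : tree (letter A)) : nat :=
  let: Node a ts := s in merges a ts + sumn (map npairs ts).

Lemma pc_nomerge a ts : ~~ merges a ts -> pc arA P (Node a ts) = Node a (map (pc arA P) ts).
Proof. by case: ts => [|[b us] [|? ?]] //= /negbTE ->. Qed.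

Lemma pc_merge a b us : merges a [:: Node b us] ->
  pc arA P (Node a [:: Node b us]) = Node (Pair a b) (map (pc arA P) us).
Proof. by move=> /= ->. Qed.

Lemma pc_unmarked a ts : ~~ P a -> pc arA P (Node a ts) = Node a (map (pc arA P) ts).
Proof.
by move=> /negbTE nPa; apply: pc_nomerge; case: ts => [|c [|? ?]] //=; rewrite nPa andbF.
Qed.

Lemma lar_label_pc s : lar arA (label (pc arA P s)) = lar arA (label s).
Proof.
case: s => a ts; have [mrg|nomrg] := boolP (merges a ts); last by rewrite pc_nomerge.
by case: ts mrg => [|[b us] [|? ?]] // mrg; rewrite pc_merge //=; case/and4P: mrg => /eqP ->.
Qed.

Lemma wf_pc s : wf (lar arA) s -> wf (lar arA) (pc arA P s).
Proof.
elim/tree_ind_in: s => a ts IH /andP[/eqP size_ts wf_ts].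
have [mrg|nomrg] := boolP (merges a ts).
  case: ts mrg IH size_ts wf_ts => [|[b us] [|? ?]] // mrg IH _ /andP[wf_c _].
  have := IH _ (or_introl erefl) wf_c; rewrite pc_merge // pc_unmarked; last by case/and4P: mrg.
  by case/and4P: mrg => _ _ /eqP lar_b _ /= /andP[]; rewrite lar_b => -> ->.
rewrite pc_nomerge //= size_map size_ts eqxx all_map /=.
by apply/allP_In => c c_ts; apply: IH c_ts (allP_In _ _ wf_ts c c_ts).
Qed.

Lemma nodes_pc s : nodes (pc arA P s) + npairs s = nodes s.
Proof.
elim/tree_ind_in: s => a ts IH; have [mrg|nomrg] := boolP (merges a ts).
  case: ts mrg IH => [|[b us] [|? ?]] // mrg IH.
  have := IH _ (or_introl erefl); rewrite pc_merge // pc_unmarked; last by case/and4P: mrg.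
  by move: mrg => /= mrg; rewrite /= mrg; lia.
rewrite pc_nomerge //= (negbTE nomrg) -map_comp -(sumn_addn_In IH).
by rewrite addSn.
Qed.

Lemma leaves_pc s : leaves (pc arA P s) = leaves s.
Proof.
elim/tree_ind_in: s => a ts IH; have [mrg|nomrg] := boolP (merges a ts).
  case: ts mrg IH => [|[b us] [|? ?]] // mrg IH.
  have := IH _ (or_introl erefl); rewrite pc_merge // pc_unmarked; last by case/and4P: mrg.
  by move=> /= <-; rewrite addn0.
rewrite pc_nomerge //= /nilp size_map -map_comp.
by congr (if _ then _ else sumn _); apply: eq_map_In.
Qed.

End PairCompression.

Definition chain_pred (Q : pred A) (x : letter A) : bool :=
  if x is Chain a _ then Q a else false.

Lemma npairs_tmap_cc_letter (Q : pred A) t :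
  npairs (chain_pred Q) (tmap cc_letter t) = count (dcut Q) (unary_edges t).
Proof.
elim/tree_ind_in: t => a ts IH /=; rewrite count_cat count_flatten -!map_comp.
congr (_ + _); last by congr sumn; apply: eq_map_In.
case: ts {IH} => [|[b us] [|? ?]] //=; rewrite !lar_cc_letter /cc_letter.
by case: (arA a == 1); case: (arA b == 1); rewrite /= ?andbF ?addn0.
Qed.

Lemma nodes_lc s : wf (lar arA) s -> lar arA (label s) != 0 ->
  nodes (lc arA s) + leaves s = nodes s.
Proof.
elim/tree_ind_in: s => f ts IH /= /andP[/eqP size_ts wf_ts] /negbTE f_nconst.
have nonleaf : nilp ts = false by rewrite /nilp size_ts f_nconst.
pose kept c := if is_const_leaf arA c then 0 else nodes (lc arA c).
have sum_kept : sumn (map nodes [seq r.2 | r <- [seq (is_const_leaf arA c, lc arA c) | c <- ts]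
                                         & ~~ r.1])
                = sumn (map kept ts).
  by elim: ts {IH size_ts wf_ts nonleaf} => //= c ts <-; rewrite /kept; case: is_const_leaf.
have kept_leaves c : List.In c ts -> kept c + leaves c = nodes c.
  move=> c_ts; have := allP_In _ _ wf_ts c c_ts; have := IH c c_ts.
  case: c {c_ts} => h us IHc /[dup] wf_c /andP[/eqP size_us _].
  rewrite /kept /is_const_leaf /=; have [h_const|h_nconst] := eqVneq (lar arA h) 0.
    by have /nilP -> : nilp us by rewrite /nilp size_us h_const.
  by move: IHc => /(_ wf_c h_nconst) /=; rewrite (negbTE h_nconst).
by rewrite f_nconst /= nonleaf sum_kept -(sumn_addn_In kept_leaves).
Qed.

End Compressions.

Theorem lemma2p3 (A : eqType) (arA : A -> nat) (t : tree A) :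
  wf arA t -> no_rep arA t -> 1 < nodes t ->
  exists P : letter A -> bool,
    let t' := pc arA P (chain_compression arA t) in
    let t'' := lc arA t' in
    4 * nodes t'' < 3 * nodes t.
Proof.
move=> wf_t nrep_t nodes_gt1.
have [Q cutQ] := dcut_quarter (unary_edges_irrefl nrep_t).
exists (chain_pred Q); rewrite /= chain_compression_no_rep //.
set s := tmap (cc_letter arA) t.
have wf_s : wf (lar arA) s by rewrite (wf_tmap (arL := arA)) //; apply: lar_cc_letter.
have root_s : lar arA (label (pc arA (chain_pred Q) s)) != 0.
  rewrite lar_label_pc label_tmap lar_cc_letter -lt0n.
  exact: wf_arity_label_gt0 wf_t nodes_gt1.
have := nodes_lc (wf_pc (chain_pred Q) wf_s) root_s.
have := nodes_pc arA (chain_pred Q) s.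
have := nodes_leq_leaves_unary_edges wf_t.
rewrite leaves_pc leaves_tmap nodes_tmap npairs_tmap_cc_letter; lia.
Qed.
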